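(* Let $k\ge1$, let $D$ be a digraph containing a cylindrical wall $W$ of order $l\ge 3k$ with vertical dicycles $Q_1,\dots,Q_l$. Then for every $(A,B)\in\mathcal{S}_k(D)$ there is exactly one side $X\in\{A,B\}$ such that $X\setminus(A\cap B)$ contains $V(Q_i)$ for some $i\in[l]$. Moreover, the map $\mathsf{big}_W$ sending each $(A,B)\in\mathcal{S}_k(D)$ to this side is a tangle of order $k$.
   Context: The elementary cylindrical $l$-wall has vertices $v_{r,c}$, $r,c\in[2l]$, and edges: for odd $r$, $(v_{r,c},v_{r,c+1})$ ($c\in[2l-1]$); for even $r$, $(v_{r,c+1},v_{r,c})$ ($c\in[2l-1]$); $(v_{r,c},v_{r+1,c})$ for $r$ odd and $c$ even; $(v_{r,c},v_{r+1,c})$ for $r<2l$ even and $c$ odd; and $(v_{2l,c},v_{1,c})$ for $c$ odd. For $j\in[l]$ its $j$-th vertical dicycle is the dicycle using exactly the vertices of columns $2j-1$ and $2j$. A cylindrical $l$-wall is a subdivision of it, with vertical dicycles $Q_1,\dots,Q_l$ the subdivided images of these. A directed separation is $(A,B)$ with $A\cup B=V(D)$ and no edge from $B\setminus A$ to $A\setminus B$; its order is $|A\cap B|$; $\mathcal{S}_k(D)$ is the set of directed separations of order $<k$. An orientation assigns to each $(A,B)\in\mathcal{S}_k$ a big side in $\{A,B\}$, the other being the small side; it is a tangle of order $k$ if no three small sides (of not necessarily distinct separations in $\mathcal{S}_k$) have union $V(D)$. *)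

From mathcomp Require Import all_boot.
Set Implicit Arguments. Unset Strict Implicit. Unset Printing Implicit Defensive.

(* A digraph is a finite vertex type V with an edge relation E : rel V. *)

Definition wall_vtx (l r c : nat) : bool := (1 <= r <= 2 * l) && (1 <= c <= 2 * l).

Definition wall_edge (l r c r' c' : nat) : bool :=
  [|| [&& odd r, 1 <= r <= 2 * l, 1 <= c, c < 2 * l, r' == r & c' == c.+1],
      [&& ~~ odd r, 1 <= r <= 2 * l, 1 <= c', c' < 2 * l, r' == r & c == c'.+1],
      [&& odd r, ~~ odd c, 1 <= r < 2 * l, 1 <= c <= 2 * l, r' == r.+1 & c' == c],
      [&& ~~ odd r, odd c, 1 <= r < 2 * l, 1 <= c <= 2 * l, r' == r.+1 & c' == c]
    | [&& r == 2 * l, odd c, 1 <= c <= 2 * l, r' == 1 & c' == c]].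

(* D = (V,E) contains a cylindrical l-wall, i.e. a subdivision of the elementary
   cylindrical l-wall as a subgraph: branch vertices phi r c (injective), and for
   every wall edge (v_{r,c}, v_{r',c'}) a directed path
   phi r c :: P r c r' c' in D from phi r c to phi r' c'; internal vertices of
   these paths are not branch vertices and lie on no other subdivided edge. *)
Definition cyl_wall (V : finType) (E : rel V) (l : nat)
    (phi : nat -> nat -> V) (P : nat -> nat -> nat -> nat -> seq V) : Prop :=
  [/\ (forall r c r' c', wall_vtx l r c -> wall_vtx l r' c' ->
         phi r c = phi r' c' -> r = r' /\ c = c'),
      (forall r c r' c', wall_edge l r c r' c' ->
         [/\ path E (phi r c) (P r c r' c'),
             last (phi r c) (P r c r' c') = phi r' c'
           & uniq (phi r c :: P r c r' c')]),
      (forall r c r' c' x, wall_edge l r c r' c' ->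
         x \in P r c r' c' -> x <> phi r' c' ->
         forall r0 c0, wall_vtx l r0 c0 -> x <> phi r0 c0)
    & (forall r c r' c' r2 c2 r2' c2' x,
         wall_edge l r c r' c' -> wall_edge l r2 c2 r2' c2' ->
         (r, c, r', c') <> (r2, c2, r2', c2') ->
         x \in P r c r' c' -> x <> phi r' c' -> x \notin P r2 c2 r2' c2')].

Definition in_cols (j c : nat) : bool := (c == 2 * j - 1) || (c == 2 * j).

(* x is a vertex of the j-th vertical dicycle Q_j of the wall (phi, P):
   the subdivided image of the wall edges within columns 2j-1 and 2j. *)
Definition inQ (V : finType) (l : nat) (phi : nat -> nat -> V)
    (P : nat -> nat -> nat -> nat -> seq V) (j : nat) (x : V) : Prop :=
  exists r c r' c', [/\ wall_edge l r c r' c', in_cols j c, in_cols j c'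
                      & x \in phi r c :: P r c r' c'].

Definition dsep (V : finType) (E : rel V) (A B : {set V}) : Prop :=
  A :|: B = setT /\ (forall x y, x \in B :\: A -> y \in A :\: B -> ~~ E x y).

Definition inSk (V : finType) (E : rel V) (k : nat) (A B : {set V}) : Prop :=
  dsep E A B /\ #|A :&: B| < k.

Definition big_side (V : finType) (o : {set V} -> {set V} -> bool) (A B : {set V}) :=
  if o A B then A else B.
Definition small_side (V : finType) (o : {set V} -> {set V} -> bool) (A B : {set V}) :=
  if o A B then B else A.

Definition is_tangle (V : finType) (E : rel V) (k : nat)
    (o : {set V} -> {set V} -> bool) : Prop :=
  forall A1 B1 A2 B2 A3 B3,
    inSk E k A1 B1 -> inSk E k A2 B2 -> inSk E k A3 B3 ->
    small_side o A1 B1 :|: small_side o A2 B2 :|: small_side o A3 B3 <> setT.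

From mathcomp Require Import all_boot zify.
From Stdlib Require Import ClassicalEpsilon.
Set Implicit Arguments. Unset Strict Implicit.

(* A vertical dicycle Q_i that avoids the separator A n B is a strongly
   connected subgraph of D - (A n B); as no edge goes from B \ A to A \ B it
   lies entirely on one side.  If Q_i lay in A \ B and Q_j in B \ A, then each
   of the l rows of the appropriate parity (odd rows run left to right, even
   rows right to left) would be a path from B \ A to A \ B, so the l pairwise
   disjoint rows would each contain a separator vertex and |A n B| >= l.
   Since the Q_i are pairwise disjoint, any set of fewer than l vertices
   misses some Q_i; this gives both a column on a side of any (A,B) in S_k,
   and, for three separations, a column avoiding all three separators, which
   then lies on all three big sides and hence on none of the small sides. *)

Lemma leq_card_of_disjoint (T : finType) (Z : {set T}) n (R : nat -> T -> Prop) :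
  (forall t1 t2 x, t1 < n -> t2 < n -> R t1 x -> R t2 x -> t1 = t2) ->
  (forall t, t < n -> exists x, x \in Z /\ R t x) -> n <= #|Z|.
Proof.
move=> Rinj Rmeet.
pose f (t : 'I_n) : T :=
  proj1_sig (constructive_indefinite_description _ (Rmeet t (ltn_ord t))).
have fP t : f t \in Z /\ R t (f t).
  by rewrite /f; case: constructive_indefinite_description => x [].
have f_inj : injective f.
  move=> t1 t2 eq12; apply: val_inj; have [_ R1] := fP t1; have [_ R2] := fP t2.
  by rewrite eq12 in R1; exact: Rinj (ltn_ord t1) (ltn_ord t2) R1 R2.
rewrite -[n]card_ord -(card_imset _ f_inj).
by apply/subset_leq_card/subsetP => _ /imsetP[t _ ->]; case: (fP t).
Qed.

Section Separation.
Variables (V : finType) (E : rel V) (A B : {set V}).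
Hypothesis sepAB : dsep E A B.

Lemma sep_sides x : x \notin A :&: B -> (x \in A :\: B) || (x \in B :\: A).
Proof.
have : x \in A :|: B by case: sepAB => -> _; rewrite inE.
by rewrite !inE; case: (x \in A); case: (x \in B).
Qed.

Lemma sep_step u v : u \in B :\: A -> E u v -> v \notin A :&: B -> v \in B :\: A.
Proof.
move=> uB uv /sep_sides/orP[vA|//].
by case: sepAB => _ /(_ u v uB vA); rewrite uv.
Qed.

Lemma path_sep_last p x y : path E x p -> y \in x :: p -> y \in B :\: A ->
  (forall z, z \in p -> z \notin A :&: B) -> last x p \in B :\: A.
Proof.
elim: p x y => [|z p IH] x y /=; first by move=> _; rewrite inE => /eqP ->.
case/andP=> xz zp; rewrite inE => /orP[/eqP->|yp] yB free;
  have free' w : w \in p -> w \notin A :&: B by move=> wp; apply: free; rewrite inE wp orbT.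
- exact: IH zp (mem_head _ _) (sep_step yB xz (free _ (mem_head _ _))) free'.
- exact: IH zp yp yB free'.
Qed.

Lemma path_sep_all p x y : path E x p -> x \in B :\: A ->
  (forall z, z \in p -> z \notin A :&: B) -> y \in x :: p -> y \in B :\: A.
Proof.
move=> xp xB free; rewrite inE => /orP[/eqP->//|yp].
case/splitPr: yp xp free => p1 p2; rewrite -cat_rcons cat_path => /andP[p1P _] free.
rewrite -(last_rcons x p1 y); apply: path_sep_last p1P (mem_head _ _) xB _.
by move=> z zp; apply: free; rewrite mem_cat zp.
Qed.

Lemma chain_meets_sep (g : nat -> V) (p : nat -> seq V) N :
  (forall m, m < N -> path E (g m) (p m) /\ last (g m) (p m) = g m.+1) ->
  g 0 \in B :\: A -> g N \notin B :\: A ->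
  exists2 m, m < N & exists2 x, x \in g m :: p m & x \in A :&: B.
Proof.
elim: N => [|N IH] gp g0 gN; first by rewrite g0 in gN.
have [gNB|gNA] := boolP (g N \in B :\: A); last first.
  have [m mN meet] := IH (fun m mN => gp m (ltnW mN)) g0 gNA.
  by exists m => //; apply: ltnW.
exists N => //; have [pN lastN] := gp N (ltnSn N).
have [/hasP[x xp xAB]|/hasPn free] := boolP (has (fun z => z \in A :&: B) (p N)).
  by exists x; rewrite // inE xp orbT.
by move: gN; rewrite -lastN (path_sep_last pN (mem_head _ _) gNB free).
Qed.

End Separation.

Lemma wall_edge_vtx l r c r' c' :
  wall_edge l r c r' c' -> wall_vtx l r c /\ wall_vtx l r' c'.
Proof. rewrite /wall_edge /wall_vtx; lia. Qed.

Lemma wall_edge_right l r c :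
  odd r -> 1 <= r <= 2 * l -> 1 <= c < 2 * l -> wall_edge l r c r c.+1.
Proof. rewrite /wall_edge; lia. Qed.

Lemma wall_edge_left l r c :
  ~~ odd r -> 1 <= r <= 2 * l -> 1 <= c < 2 * l -> wall_edge l r c.+1 r c.
Proof. rewrite /wall_edge; lia. Qed.

(* In row r, Q_i enters at column [col_in i r] and leaves at [col_out i r];
   it leaves row r in the column through which it enters row r + 1. *)
Definition col_in (i r : nat) : nat := if odd r then 2 * i - 1 else 2 * i.
Definition col_out (i r : nat) : nat := if odd r then 2 * i else 2 * i - 1.

Lemma in_cols_in i r : in_cols i (col_in i r).
Proof. by rewrite /in_cols /col_in; case: (odd r); rewrite eqxx ?orbT. Qed.

Lemma in_cols_out i r : in_cols i (col_out i r).
Proof. by rewrite /in_cols /col_out; case: (odd r); rewrite eqxx ?orbT. Qed.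

Lemma in_colsP i r c : in_cols i c -> c = col_in i r \/ c = col_out i r.
Proof. rewrite /in_cols /col_in /col_out; case: (odd r); lia. Qed.

Lemma in_cols_inj i j c : 1 <= i -> 1 <= j -> in_cols i c -> in_cols j c -> i = j.
Proof. rewrite /in_cols; lia. Qed.

Lemma wall_edge_across l i r : 1 <= i <= l -> 1 <= r <= 2 * l ->
  wall_edge l r (col_in i r) r (col_out i r).
Proof. rewrite /wall_edge /col_in /col_out; case: (odd r) => /=; lia. Qed.

Lemma wall_edge_down l i r : 1 <= i <= l -> 1 <= r < 2 * l ->
  wall_edge l r (col_out i r) r.+1 (col_in i r.+1).
Proof. rewrite /wall_edge /col_in /col_out /=; case: (odd r) => /=; lia. Qed.

Lemma wall_edge_around l i : 1 <= i <= l ->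
  wall_edge l (2 * l) (col_out i (2 * l)) 1 (col_in i 1).
Proof. rewrite /wall_edge /col_in /col_out oddM /=; lia. Qed.

Section ColumnCycle.
Variables (l i : nat) (S : nat -> nat -> Prop).
Hypothesis Hi : 1 <= i <= l.
Hypothesis S_closed : forall r c r' c', wall_edge l r c r' c' ->
  in_cols i c -> in_cols i c' -> S r c -> S r' c'.
Arguments S_closed {r c r' c'}.

Lemma column_closed_across r :
  1 <= r <= 2 * l -> S r (col_in i r) -> S r (col_out i r).
Proof.
by move=> Hr; apply: S_closed (wall_edge_across Hi Hr) (in_cols_in _ _) (in_cols_out _ _).
Qed.

Lemma column_closed_down r :
  1 <= r < 2 * l -> S r (col_out i r) -> S r.+1 (col_in i r.+1).
Proof. by move=> Hr; apply: S_closed (wall_edge_down Hi Hr) (in_cols_out _ _) (in_cols_in _ _). Qed.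

Lemma column_closed_around : S (2 * l) (col_out i (2 * l)) -> S 1 (col_in i 1).
Proof. exact: S_closed (wall_edge_around Hi) (in_cols_out _ _) (in_cols_in _ _). Qed.

Lemma column_closed_up r r' :
  1 <= r -> r <= r' <= 2 * l -> S r (col_in i r) -> S r' (col_in i r').
Proof.
move=> Hr /andP[rr' Hr']; rewrite -(subnKC rr') in Hr' *.
elim: (r' - r) Hr' => [|d IH] Hd Sr; first by rewrite addn0.
rewrite addnS; apply: column_closed_down; first lia.
by apply: column_closed_across; [lia | apply: IH => //; lia].
Qed.

Lemma column_closed_from_entry r : 1 <= r <= 2 * l -> S r (col_in i r) ->
  forall r' c, 1 <= r' <= 2 * l -> in_cols i c -> S r' c.
Proof.
move=> Hr Sr r' c Hr' /(in_colsP r') ic.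
have S2l := @column_closed_up r (2 * l) ltac:(lia) ltac:(lia) Sr.
have S1 := column_closed_around (@column_closed_across (2 * l) ltac:(lia) S2l).
have Sr' := @column_closed_up 1 r' ltac:(lia) ltac:(lia) S1.
by case: ic => ->; last exact: column_closed_across.
Qed.

Lemma column_closed_all r0 c0 : 1 <= r0 <= 2 * l -> in_cols i c0 -> S r0 c0 ->
  forall r c, 1 <= r <= 2 * l -> in_cols i c -> S r c.
Proof.
move=> Hr0 /(in_colsP r0)[->|->] S0; first exact: column_closed_from_entry S0.
have [lt0|ge0] := ltnP r0 (2 * l).
  by apply: (@column_closed_from_entry r0.+1); [lia | apply: column_closed_down S0; lia].
have r0E : r0 = 2 * l by lia.
by rewrite r0E in S0; apply: (@column_closed_from_entry 1); [lia | exact: column_closed_around S0].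
Qed.

End ColumnCycle.

Lemma side_unique (T : finType) (A B X Y : {set T}) x :
  X = A \/ X = B -> Y = A \/ Y = B ->
  x \in X :\: (A :&: B) -> x \in Y :\: (A :&: B) -> X = Y.
Proof. by case=> ->; case=> -> //; rewrite !inE; case: (x \in A); case: (x \in B). Qed.

Lemma big_side_cases (T : finType) (o : {set T} -> {set T} -> bool) A B :
  big_side o A B = A \/ big_side o A B = B.
Proof. by rewrite /big_side; case: (o A B); [left | right]. Qed.

Lemma small_side_notin (T : finType) (o : {set T} -> {set T} -> bool) A B x :
  x \in big_side o A B :\: (A :&: B) -> x \notin small_side o A B.
Proof.
by rewrite /big_side /small_side; case: (o A B); rewrite !inE; case: (x \in A); case: (x \in B).
Qed.

Section Wall.
Variables (V : finType) (E : rel V) (l : nat) (phi : nat -> nat -> V)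
  (P : nat -> nat -> nat -> nat -> seq V).
Hypothesis W : cyl_wall E l phi P.

Definition on_row (r : nat) (x : V) : Prop :=
  exists c c', wall_edge l r c r c' /\ x \in phi r c :: P r c r c'.

Lemma subdiv_path r c r' c' : wall_edge l r c r' c' ->
  path E (phi r c) (P r c r' c') /\ last (phi r c) (P r c r' c') = phi r' c'.
Proof. by case: W => _ hP _ _ /hP[]. Qed.

Lemma branch_on_subdiv s t r c r' c' :
  wall_vtx l s t -> wall_edge l r c r' c' -> phi s t \in phi r c :: P r c r' c' ->
  (s, t) = (r, c) \/ (s, t) = (r', c').
Proof.
case: W => inj _ internal _ vst e; have [vrc vrc'] := wall_edge_vtx e.
rewrite inE => /orP[/eqP st|st]; first by have [-> ->] := inj _ _ _ _ vst vrc st; left.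
have [st'|/eqP st'] := eqVneq (phi s t) (phi r' c').
  by have [-> ->] := inj _ _ _ _ vst vrc' st'; right.
by case: (internal _ _ _ _ _ e st st' _ _ vst).
Qed.

Lemma subdiv_meet r c r' c' r2 c2 r2' c2' x :
  wall_edge l r c r' c' -> wall_edge l r2 c2 r2' c2' ->
  x \in phi r c :: P r c r' c' -> x \in phi r2 c2 :: P r2 c2 r2' c2' ->
  (r, c, r', c') = (r2, c2, r2', c2') \/
  exists s t, ((s, t) = (r, c) \/ (s, t) = (r', c')) /\
              ((s, t) = (r2, c2) \/ (s, t) = (r2', c2')).
Proof.
move=> e e2 x1 x2; have [v v'] := wall_edge_vtx e.
case: (W) => _ _ internal disj.
move: x1; rewrite inE => /orP[/eqP xb|xp].
  by right; exists r, c; split; [left | apply: branch_on_subdiv v e2 _; rewrite -xb].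
have [xb'|/eqP xb'] := eqVneq x (phi r' c').
  by right; exists r', c'; split; [right | apply: branch_on_subdiv v' e2 _; rewrite -xb'].
have [v2 _] := wall_edge_vtx e2.
move: x2; rewrite inE => /orP[/eqP x2|x2]; first by case: (internal _ _ _ _ _ e xp xb' _ _ v2).
have [same|/eqP diff] := eqVneq (r, c, r', c') (r2, c2, r2', c2'); first by left.
by move: (disj _ _ _ _ _ _ _ _ _ e e2 diff xp xb'); rewrite x2.
Qed.

Lemma column_disjoint i j x :
  1 <= i -> 1 <= j -> inQ l phi P i x -> inQ l phi P j x -> i = j.
Proof.
move=> i1 j1 [r [c [r' [c' [e ic ic' xe]]]]] [r2 [c2 [r2' [c2' [e2 jc jc' xe2]]]]].
case: (subdiv_meet e e2 xe xe2) => [[_ cc2 _ _]|[s [t [st st2]]]].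
  by rewrite cc2 in ic; exact: in_cols_inj ic jc.
apply: (@in_cols_inj i j t) => //.
  by case: st => -[_ ->].
by case: st2 => -[_ ->].
Qed.

Lemma row_disjoint r r2 x : on_row r x -> on_row r2 x -> r = r2.
Proof.
move=> [c [c' [e xe]]] [c2 [c2' [e2 xe2]]].
case: (subdiv_meet e e2 xe xe2) => [[-> _ _ _]//|[s [t [st st2]]]].
by case: st => -[<- _]; case: st2 => -[<- _].
Qed.

Lemma branch_in_column i r c :
  1 <= i <= l -> 1 <= r <= 2 * l -> in_cols i c -> inQ l phi P i (phi r c).
Proof.
move=> Hi Hr /(in_colsP r) ci; have e := wall_edge_across Hi Hr.
exists r, (col_in i r), r, (col_out i r); split; rewrite ?in_cols_in ?in_cols_out //.
case: ci => ->; first exact: mem_head.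
by have [_ <-] := subdiv_path e; exact: mem_last.
Qed.

Lemma exists_free_column (Z : {set V}) : #|Z| < l ->
  exists2 i, 1 <= i <= l & forall x, inQ l phi P i x -> x \notin Z.
Proof.
move=> Zl; apply: NNPP => none.
suff : l <= #|Z| by lia.
apply: (leq_card_of_disjoint (R := fun t x => inQ l phi P t.+1 x)).
  by move=> t1 t2 x _ _ Q1 Q2; apply/succn_inj/(column_disjoint _ _ Q1 Q2).
move=> t tl; apply: NNPP => miss; apply: none; exists t.+1; first lia.
by move=> x Qx; apply/negP => xZ; apply: miss; exists x.
Qed.

Lemma leq_card_rows (Z : {set V}) s :
  (forall t, t < l -> exists2 x, on_row (2 * t + s) x & x \in Z) -> l <= #|Z|.
Proof.
move=> meet; apply: (leq_card_of_disjoint (R := fun t => on_row (2 * t + s))).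
  by move=> t1 t2 x _ _ R1 R2; have := row_disjoint R1 R2; lia.
by move=> t /meet[x xr xZ]; exists x.
Qed.

Section Separated.
Variables (A B : {set V}).
Hypothesis sepAB : dsep E A B.

Section FreeColumn.
Variable i : nat.
Hypothesis Hi : 1 <= i <= l.
Hypothesis free : forall x, inQ l phi P i x -> x \notin A :&: B.

Lemma column_edge_head r c r' c' y : wall_edge l r c r' c' ->
  in_cols i c -> in_cols i c' -> y \in phi r c :: P r c r' c' -> y \in B :\: A ->
  phi r' c' \in B :\: A.
Proof.
move=> e ic ic' ye yB; have [pth <-] := subdiv_path e.
apply: (path_sep_last sepAB pth ye yB) => z zp.
by apply: free; exists r, c, r', c'; rewrite inE zp orbT.
Qed.

Lemma column_edge_tail r c r' c' y : wall_edge l r c r' c' ->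
  in_cols i c -> in_cols i c' -> phi r c \in B :\: A -> y \in phi r c :: P r c r' c' ->
  y \in B :\: A.
Proof.
move=> e ic ic' xB; have [pth _] := subdiv_path e.
apply: (path_sep_all sepAB pth xB) => z zp.
by apply: free; exists r, c, r', c'; rewrite inE zp orbT.
Qed.

Lemma free_column_in_B :
  (exists2 y, inQ l phi P i y & y \in B :\: A) ->
  forall x, inQ l phi P i x -> x \in B :\: A.
Proof.
move=> [y [r [c [r' [c' [e ic ic' ye]]]]] yB].
have [_ /andP[Hr' _]] := wall_edge_vtx e.
have branchB := column_closed_all (S := fun r c => phi r c \in B :\: A) Hi
  (fun r c r' c' e ic ic' => column_edge_head e ic ic' (mem_head _ _))
  Hr' ic' (column_edge_head e ic ic' ye yB).
move=> x [r2 [c2 [r2' [c2' [e2 ic2 ic2' xe]]]]].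
have [/andP[Hr2 _] _] := wall_edge_vtx e2.
exact: column_edge_tail e2 ic2 ic2' (branchB _ _ Hr2 ic2) xe.
Qed.

Lemma free_column_one_side :
  (forall x, inQ l phi P i x -> x \in A :\: B) \/
  (forall x, inQ l phi P i x -> x \in B :\: A).
Proof.
have [someB|noneB] := classic (exists2 y, inQ l phi P i y & y \in B :\: A).
  by right; apply: free_column_in_B.
left=> x Qx; have /orP[//|xB] := sep_sides sepAB (free Qx).
by case: noneB; exists x.
Qed.

End FreeColumn.

Lemma row_meets_separator r c c' :
  1 <= r <= 2 * l -> 1 <= c <= 2 * l -> 1 <= c' <= 2 * l ->
  (if odd r then c <= c' else c' <= c) ->
  phi r c \in B :\: A -> phi r c' \notin B :\: A ->
  exists2 x, on_row r x & x \in A :&: B.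
Proof.
move=> Hr Hc Hc'; case: ifP => odd_r cc' cB c'A.
- have edge m : m < c' - c -> wall_edge l r (c + m) r (c + m).+1.
    by move=> mc; apply: wall_edge_right; rewrite ?odd_r //; lia.
  have steps m : m < c' - c -> path E (phi r (c + m)) (P r (c + m) r (c + m).+1) /\
      last (phi r (c + m)) (P r (c + m) r (c + m).+1) = phi r (c + m.+1).
    by move=> /edge/subdiv_path; rewrite addnS.
  have := chain_meets_sep sepAB steps; rewrite addn0 subnKC //.
  case/(_ cB c'A) => m mc [x xe xAB].
  by exists x => //; exists (c + m), (c + m).+1; split; first exact: edge.
- have edge m : m < c - c' -> wall_edge l r (c - m) r (c - m.+1).
    move=> mc; have -> : c - m = (c - m.+1).+1 by lia.
    by apply: wall_edge_left; rewrite ?odd_r //; lia.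
  have steps m : m < c - c' -> path E (phi r (c - m)) (P r (c - m) r (c - m.+1)) /\
      last (phi r (c - m)) (P r (c - m) r (c - m.+1)) = phi r (c - m.+1).
    exact: (fun mc => subdiv_path (edge m mc)).
  have := chain_meets_sep sepAB steps; rewrite subn0 subKn //.
  case/(_ cB c'A) => m mc [x xe xAB].
  by exists x => //; exists (c - m), (c - m.+1); split; first exact: edge.
Qed.

Lemma no_columns_on_both_sides i j : #|A :&: B| < l ->
  1 <= i <= l -> 1 <= j <= l ->
  (forall x, inQ l phi P i x -> x \in A :\: B) ->
  (forall x, inQ l phi P j x -> x \in B :\: A) -> False.
Proof.
move=> small Hi Hj QA QB.
have inA r c : 1 <= r <= 2 * l -> in_cols i c -> phi r c \notin B :\: A.
  by move=> Hr /(branch_in_column Hi Hr)/QA; rewrite !inE => /andP[/negPf-> ->].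
have inB r c : 1 <= r <= 2 * l -> in_cols j c -> phi r c \in B :\: A.
  by move=> Hr /(branch_in_column Hj Hr)/QB.
have [lt_ij|gt_ij|eq_ij] := ltngtP i j.
- suff : l <= #|A :&: B| by lia.
  apply: (leq_card_rows (s := 2)) => t tl.
  apply: (@row_meets_separator _ (2 * j - 1) (2 * i));
    [lia | lia | lia | case: ifP; lia | apply: inB | apply: inA]; unfold in_cols; lia.
- suff : l <= #|A :&: B| by lia.
  apply: (leq_card_rows (s := 1)) => t tl.
  apply: (@row_meets_separator _ (2 * j) (2 * i - 1));
    [lia | lia | lia | case: ifP; lia | apply: inB | apply: inA]; unfold in_cols; lia.
- subst j; have := inA 1 (2 * i) ltac:(lia) (in_cols_out i 1).
  by rewrite (inB 1 (2 * i) ltac:(lia) (in_cols_out i 1)).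
Qed.

Lemma free_column_on_side X i j : #|A :&: B| < l -> X = A \/ X = B ->
  1 <= i <= l -> (forall x, inQ l phi P i x -> x \in X :\: (A :&: B)) ->
  1 <= j <= l -> (forall x, inQ l phi P j x -> x \notin A :&: B) ->
  forall x, inQ l phi P j x -> x \in X :\: (A :&: B).
Proof.
move=> small [->|->] Hi Qi Hj free; rewrite setDIr setDv ?set0U ?setU0 in Qi *;
  case: (free_column_one_side Hj free) => // Qj.
- by case: (no_columns_on_both_sides small Hi Hj Qi Qj).
- by case: (no_columns_on_both_sides small Hj Hi Qj Qi).
Qed.

Lemma exists_unique_side : #|A :&: B| < l ->
  exists! X : {set V}, (X = A \/ X = B) /\
    exists i, 1 <= i <= l /\ (forall x, inQ l phi P i x -> x \in X :\: (A :&: B)).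
Proof.
move=> small; have [i Hi free] := exists_free_column small.
have [X XAB QX] : exists2 X, X = A \/ X = B &
    forall x, inQ l phi P i x -> x \in X :\: (A :&: B).
  by case: (free_column_one_side Hi free) => Q; [exists A; [left|] | exists B; [right|]];
    rewrite // setDIr setDv ?set0U ?setU0.
exists X; split; first by split; last exists i.
move=> Y [YAB [j [Hj QY]]].
have v := branch_in_column Hi (r := 1) ltac:(lia) (in_cols_out i 1).
exact: side_unique XAB YAB (QX _ v) (free_column_on_side small YAB Hj QY Hi free v).
Qed.

Lemma free_column_off_small_side o i j : #|A :&: B| < l ->
  1 <= i <= l -> (forall x, inQ l phi P i x -> x \in big_side o A B :\: (A :&: B)) ->
  1 <= j <= l -> (forall x, inQ l phi P j x -> x \notin A :&: B) ->
  forall x, inQ l phi P j x -> x \notin small_side o A B.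
Proof.
move=> small Hi Qi Hj free x Qx; apply: small_side_notin.
exact: free_column_on_side small (big_side_cases o A B) Hi Qi Hj free x Qx.
Qed.

End Separated.

Lemma wall_tangle k o : 3 * k <= l ->
  (forall A B : {set V}, inSk E k A B -> exists i, 1 <= i <= l /\
     (forall x, inQ l phi P i x -> x \in big_side o A B :\: (A :&: B))) ->
  is_tangle E k o.
Proof.
move=> lk big A1 B1 A2 B2 A3 B3 S1 S2 S3 cover.
set Z := A1 :&: B1 :|: A2 :&: B2 :|: A3 :&: B3.
have [m Hm freeZ] : exists2 m, 1 <= m <= l & forall x, inQ l phi P m x -> x \notin Z.
  by apply: exists_free_column; case: S1 S2 S3 => [_ ?] [_ ?] [_ ?]; rewrite /Z !cardsU; lia.
have off A B : inSk E k A B -> A :&: B \subset Z ->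
    forall x, inQ l phi P m x -> x \notin small_side o A B.
  move=> S sub; have [i [Hi Qi]] := big A B S; case: S => sepAB ABk.
  apply: (free_column_off_small_side sepAB _ Hi Qi Hm); first lia.
  by move=> x /freeZ; apply: contra; apply: (subsetP sub).
have v := branch_in_column Hm (r := 1) ltac:(lia) (in_cols_out m 1).
move/setP/(_ (phi 1 (col_out m 1))): cover; rewrite !in_setU in_setT.
by rewrite !(negbTE (off _ _ _ _ _ v)) // /Z; apply/subsetP => x xAB; rewrite !in_setU xAB ?orbT.
Qed.

End Wall.

Theorem lemma9p2 (V : finType) (E : rel V) (k l : nat)
    (phi : nat -> nat -> V) (P : nat -> nat -> nat -> nat -> seq V) :
  1 <= k -> 3 * k <= l -> cyl_wall E l phi P ->
  (forall A B : {set V}, inSk E k A B ->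
     exists! X : {set V}, (X = A \/ X = B) /\
       exists i, 1 <= i <= l /\
         (forall x, inQ l phi P i x -> x \in X :\: (A :&: B)))
  /\
  (forall o : {set V} -> {set V} -> bool,
     (forall A B : {set V}, inSk E k A B ->
        exists i, 1 <= i <= l /\
          (forall x, inQ l phi P i x -> x \in big_side o A B :\: (A :&: B))) ->
     is_tangle E k o).
Proof.
move=> _ lk W; split=> [A B [sepAB ABk] | o big].
- by apply: (exists_unique_side W sepAB); lia.
- exact: (wall_tangle W lk big).
Qed.
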